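(* Let $(V,\nu)$ be a gauged space. Let $V_1=V\oplus\mathbb{R}$ (algebraic direct sum) and define $\nu_1(x,\lambda)=\max\{\nu(x)+\lambda,0\}$. Then $(V_1,\nu_1)$ is a gauged space and $\nu_1(x,0)=\nu(x)$ for all $x\in V$; consequently $x\mapsto(x,0)$ is an isometric order embedding of $(V,\|\cdot\|_\nu,V_{+,\nu})$ into $(V_1,\|\cdot\|_{\nu_1},(V_1)_{+})$, where $(V_1)_+=\ker\overline{\nu_1}$. Moreover, $(V_1,(V_1)_+)$ is an Archimedean order unit space with order unit $e=(0,1)$, and $\nu_1(x,\lambda)=\inf\{t>0:(x,\lambda)\le t(0,1)\}$ for all $(x,\lambda)\in V_1$.
   Context: A gauge on a real vector space $V$ is a map $\nu:V\to[0,\infty)$ with $\nu(x+y)\le\nu(x)+\nu(y)$ and $\nu(tx)=t\nu(x)$ for all $x,y\in V$, $t>0$; its conjugate is $\overline{\nu}(x)=\nu(-x)$. A gauge is proper if for every $x\neq0$, $\nu(x)\neq0$ or $\overline{\nu}(x)\neq0$; a gauged space is a pair $(V,\nu)$ with $\nu$ a proper gauge. The induced norm is $\|x\|_\nu=\max\{\nu(x),\overline{\nu}(x)\}$ and the induced (proper, closed) cone is $V_{+,\nu}=\ker\overline{\nu}$; $x\le y$ means $y-x$ lies in the cone. An order embedding is an injective linear map $\phi$ with $\phi(x)\ge0$ iff $x\ge0$. An ordered vector space $(V,V_+)$ (real vector space with proper cone) is an order unit space with order unit $e$ if for each $a\in V$ there is $t>0$ with $-te\le a\le te$; the order unit is Archimedean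 if ($te+a\ge0$ for all $t>0$) implies $a\ge 0$; an Archimedean order unit (AOU) space is an order unit space with Archimedean order unit. *)

From HB Require Import structures.
From mathcomp Require Import all_boot all_order all_algebra.
Set Implicit Arguments. Unset Strict Implicit. Unset Printing Implicit Defensive.
Import Order.TTheory GRing.Theory Num.Theory.
Local Open Scope ring_scope.

Section Gauges.
Variables (R : realFieldType) (V : lmodType R).

Definition gauge (nu : V -> R) : Prop :=
  [/\ forall x, 0 <= nu x,
      forall x y, nu (x + y) <= nu x + nu y
    & forall (t : R) x, 0 < t -> nu (t *: x) = t * nu x].

Definition conj_gauge (nu : V -> R) : V -> R := fun x => nu (- x).

Definition proper_gauge (nu : V -> R) : Prop :=
  gauge nu /\ forall x, x != 0 -> nu x != 0 \/ conj_gauge nu x != 0.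

Definition gauge_norm (nu : V -> R) (x : V) : R := Num.max (nu x) (conj_gauge nu x).

Definition gcone (nu : V -> R) (x : V) : Prop := conj_gauge nu x = 0.

Definition cle (C : V -> Prop) (x y : V) : Prop := C (y - x).

Definition proper_cone (C : V -> Prop) : Prop :=
  [/\ forall x y, C x -> C y -> C (x + y),
      forall (t : R) x, 0 <= t -> C x -> C (t *: x)
    & forall x, C x -> C (- x) -> x = 0].

Definition order_unit_space (C : V -> Prop) (e : V) : Prop :=
  proper_cone C /\
  forall a, exists2 t : R, 0 < t & cle C (- (t *: e)) a /\ cle C a (t *: e).

Definition archimedean_unit (C : V -> Prop) (e : V) : Prop :=
  forall a, (forall t : R, 0 < t -> C (t *: e + a)) -> C a.

Definition AOU_space (C : V -> Prop) (e : V) : Prop :=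
  order_unit_space C e /\ archimedean_unit C e.

End Gauges.

Definition order_embedding (R : realFieldType) (V W : lmodType R)
  (CV : V -> Prop) (CW : W -> Prop) (phi : V -> W) : Prop :=
  [/\ forall (a : R) x y, phi (a *: x + y) = a *: phi x + phi y,
      injective phi
    & forall x, CW (phi x) <-> CV x].

Definition isometric (R : realFieldType) (V W : lmodType R)
  (nV : V -> R) (nW : W -> R) (phi : V -> W) : Prop :=
  forall x, nW (phi x) = nV x.

Definition is_inf (R : realFieldType) (S : R -> Prop) (m : R) : Prop :=
  (forall s, S s -> m <= s) /\
  (forall m', (forall s, S s -> m' <= s) -> m' <= m).

Definition ext_space (R : realFieldType) (V : lmodType R) : lmodType R :=
  (V * R^o)%type.

Definition nu1 (R : realFieldType) (V : lmodType R) (nu : V -> R)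
  : ext_space V -> R := fun p => Num.max (nu p.1 + p.2) 0.

From HB Require Import structures.
From mathcomp Require Import all_boot all_order all_algebra.
From mathcomp Require Import lra.
Set Implicit Arguments. Unset Strict Implicit. Unset Printing Implicit Defensive.
Import Order.TTheory GRing.Theory Num.Theory.
Local Open Scope ring_scope.

(* Writing e = (0, 1), the inequality (x, l) <= t e means nu x + l <= t, so
   nu1 (x, l) = max (nu x + l) 0 is the least t > 0 with (x, l) <= t e; in
   particular every vector lies below a multiple of e, and (x, l) >= -t e for
   all t > 0 means nu (- x) <= l, i.e. (x, l) >= 0.  The remaining claims are
   direct computations, properness of nu1 reducing to properness of nu on
   vectors with both nu x = 0 and nu (- x) = 0. *)

Section GaugeFacts.
Variables (R : realFieldType) (V : lmodType R) (mu : V -> R).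
Hypothesis mu_proper : proper_gauge mu.

Lemma gauge0 : gauge mu -> mu 0 = 0.
Proof.
case=> _ _ muZ; have := muZ 2 0 (ltr0Sn _ 1).
rewrite scaler0 mulr_natl mulr2n => mu0.
by apply: (@addrI _ (mu 0)); rewrite addr0 -mu0.
Qed.

Lemma proper_gauge_null x : mu x = 0 -> mu (- x) = 0 -> x = 0.
Proof.
move=> mux0 muNx0; case: (eqVneq x 0) => // /mu_proper.2.
by rewrite /conj_gauge mux0 muNx0 eqxx; case.
Qed.

Lemma proper_cone_gcone : proper_cone (gcone mu).
Proof.
case: mu_proper => -[mu_ge0 muD muZ] _; rewrite /gcone /conj_gauge.
split.
- move=> x y Cx Cy; apply/eqP; rewrite eq_le mu_ge0 andbT opprD.
  by rewrite -[0]addr0 -{1}Cx -Cy muD.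
- move=> t x /[swap] Cx; rewrite le_eqVlt => /predU1P [<- | t_gt0].
    by rewrite scale0r oppr0 gauge0.
  by rewrite -scalerN muZ // Cx mulr0.
- move=> x Cx; rewrite opprK => CNx.
  by apply: proper_gauge_null.
Qed.

End GaugeFacts.

Section Unitization.
Variables (R : realFieldType) (V : lmodType R) (nu : V -> R).
Hypothesis nu_gauge : gauge nu.

Let e : ext_space V := ((0 : V), 1 : R^o).

Let nu_nonneg x : 0 <= nu x. Proof. by case: nu_gauge. Qed.

Lemma scale_unit (t : R) : t *: e = ((0 : V), t : R^o).
Proof. by rewrite /e; congr (_, _); rewrite /= ?scaler0 // [_ *: _]mulr1. Qed.

Lemma gcone_nu1 (p : ext_space V) : gcone (nu1 nu) p <-> nu (- p.1) <= p.2.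
Proof.
rewrite /gcone /conj_gauge /nu1 /=.
by split => [/max_idPr | ?]; [rewrite subr_le0 | apply/max_idPr; rewrite subr_le0].
Qed.

Lemma le_nu1_unit (p : ext_space V) (t : R) :
  cle (gcone (nu1 nu)) p (t *: e) <-> nu p.1 + p.2 <= t.
Proof.
rewrite /cle scale_unit gcone_nu1 /= sub0r opprK.
by split; [rewrite lerBrDr | rewrite -lerBrDr].
Qed.

Lemma ge_nu1_Nunit (p : ext_space V) (t : R) :
  cle (gcone (nu1 nu)) (- (t *: e)) p <-> nu (- p.1) <= p.2 + t.
Proof. by rewrite /cle opprK scale_unit gcone_nu1 /= addr0. Qed.

Lemma nu1_inl (x : V) : nu1 nu (x, 0 : R^o) = nu x.
Proof. by rewrite /nu1 /= addr0; apply/max_idPl. Qed.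

Lemma gauge_nu1 : gauge (nu1 nu).
Proof.
case: nu_gauge => _ nuD nuZ; rewrite /nu1.
split=> [p | [x l] [y m] | t [x l] t_gt0] /=.
- by rewrite le_max lexx orbT.
- have := nuD x y.
  case: (lerP (nu (x + y) + (l + m)) 0); case: (lerP (nu x + l) 0);
    case: (lerP (nu y + m) 0); lra.
- by rewrite nuZ // -mulrDr maxr_pMr ?ltW // mulr0.
Qed.

Lemma proper_gauge_nu1 : proper_gauge nu -> proper_gauge (nu1 nu).
Proof.
move=> nu_proper; split; first exact: gauge_nu1.
move=> [x l] xl_neq0; case: (eqVneq (nu1 nu (x, l)) 0) => [|]; last by left.
rewrite /conj_gauge /nu1 /= => /max_idPr nu1_le0; right; apply/eqP.
move=> /max_idPr nu1N_le0; move: xl_neq0.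
have nux_ge0 := nu_nonneg x; have nuNx_ge0 := nu_nonneg (- x).
have x0 : x = 0 by apply: (proper_gauge_null nu_proper); lra.
suff -> : l = 0 by rewrite x0 eqxx.
lra.
Qed.

Lemma order_embedding_inl :
  order_embedding (gcone nu) (gcone (nu1 nu)) (fun x : V => (x, 0 : R^o)).
Proof.
split=> [a x y | x y [] // | x].
- by congr (_, _); rewrite /= scaler0 addr0.
- rewrite gcone_nu1 /gcone /conj_gauge /=.
  by split=> [nuNx_le0 | ->//]; apply/eqP; rewrite eq_le nuNx_le0 nu_nonneg.
Qed.

Lemma isometric_inl :
  isometric (gauge_norm nu) (gauge_norm (nu1 nu)) (fun x : V => (x, 0 : R^o)).
Proof.
move=> x; rewrite /gauge_norm /conj_gauge nu1_inl.
by rewrite -[(- (x, 0 : R^o))]/((- x, - 0 : R^o)) oppr0 nu1_inl.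
Qed.

Lemma order_unit_space_nu1 :
  proper_gauge nu -> order_unit_space (gcone (nu1 nu)) e.
Proof.
move=> nu_proper; split; first exact/proper_cone_gcone/proper_gauge_nu1.
move=> [x l]; have := nu_nonneg x; have := nu_nonneg (- x).
have := ler_norm l; have := ler_norm (- l); rewrite normrN.
exists (nu x + nu (- x) + `|l| + 1); first lra.
by split; [apply/ge_nu1_Nunit | apply/le_nu1_unit] => /=; lra.
Qed.

Lemma archimedean_unit_nu1 : archimedean_unit (gcone (nu1 nu)) e.
Proof.
move=> [x l] above_Ne; apply/gcone_nu1 => /=; rewrite leNgt; apply/negP.
move=> l_lt; have t_gt0 : 0 < (nu (- x) - l) / 2 by lra.
have := above_Ne _ t_gt0; rewrite scale_unit => /gcone_nu1 /=.
by rewrite add0r; lra.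
Qed.

Lemma nu1_is_inf (p : ext_space V) :
  is_inf (fun t : R => 0 < t /\ cle (gcone (nu1 nu)) p (t *: e)) (nu1 nu p).
Proof.
rewrite /nu1; set M := Num.max _ _.
have M_ge : nu p.1 + p.2 <= M by rewrite le_max lexx.
have M_ge0 : 0 <= M by rewrite le_max lexx orbT.
split=> [t [t_gt0 /le_nu1_unit t_ge] | m lb].
  by rewrite ge_max; apply/andP; split; lra.
rewrite leNgt; apply/negP => M_lt.
have mid_gt0 : 0 < (m + M) / 2 by lra.
have mid_ub : cle (gcone (nu1 nu)) p (((m + M) / 2) *: e).
  by apply/le_nu1_unit; lra.
have := lb _ (conj mid_gt0 mid_ub); lra.
Qed.

End Unitization.

Theorem proposition2p12 (R : realFieldType) (V : lmodType R) (nu : V -> R)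
  (hnu : proper_gauge nu) :
  [/\ proper_gauge (nu1 nu),
      (forall x : V, nu1 nu (x, 0 : R^o) = nu x),
      order_embedding (gcone nu) (gcone (nu1 nu))
        (fun x : V => (x, 0 : R^o) : ext_space V) /\
      isometric (gauge_norm nu) (gauge_norm (nu1 nu))
        (fun x : V => (x, 0 : R^o) : ext_space V),
      AOU_space (gcone (nu1 nu)) ((0 : V), 1 : R^o) : Prop
    & forall p : ext_space V,
        is_inf (fun t : R => 0 < t /\
                  cle (gcone (nu1 nu)) p (t *: (((0 : V), 1 : R^o) : ext_space V)))
               (nu1 nu p)].
Proof.
have nu_gauge : gauge nu by case: hnu.
split.
- exact: proper_gauge_nu1.
- exact: nu1_inl.
- by split; [apply: order_embedding_inl | apply: isometric_inl].
- by split; [apply: order_unit_space_nu1 | apply: archimedean_unit_nu1].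
- exact: nu1_is_inf.
Qed.
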